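(* Let $(X,\tau_X,\partial_X)$ be a Polish topometric space, $(Y,\tau_Y)$ a Polish space, and $f\colon(Y,\tau_Y)\to(X,\tau_X)$ a continuous map with $\tau_X$-dense image such that for every open $U\subseteq Y$ and every $\varepsilon>0$ the set $(fU)_\varepsilon\subseteq X$ is open. Assume also that for every open $V\subseteq X$ and every $\varepsilon>0$ the set $(V)_\varepsilon$ is open. Then for every co-meagre $A\subseteq Y$, the $\partial_X$-closure $\overline{f(A)}^{\partial_X}$ is co-meagre in $X$.
   Context: A topometric space is a triple $(X,\tau,\partial)$ where $\tau$ is a topology and $\partial$ a metric whose topology refines $\tau$ and which is $\tau$-lower semi-continuous ($\{(x,y)\colon\partial(x,y)\le r\}$ is closed in $(X,\tau)^2$ for every $r$); it is Polish if $\tau$ is Polish. For $B\subseteq X$, $(B)_\varepsilon=\{x\colon\partial_X(x,B)<\varepsilon\}$. *)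

From HB Require Import structures.
From mathcomp Require Import all_boot all_order all_algebra.
From mathcomp Require Import all_classical all_reals all_analysis.
Set Implicit Arguments. Unset Strict Implicit. Unset Printing Implicit Defensive.
Import Order.TTheory GRing.Theory Num.Theory.
Local Open Scope classical_set_scope.
Local Open Scope ring_scope.

Definition is_metric (R : realType) (T : Type) (d : T -> T -> R) : Prop :=
  [/\ forall x y, 0 <= d x y,
      forall x y, d x y = 0 <-> x = y,
      forall x y, d x y = d y x &
      forall x y z, d x z <= d x y + d y z].

Definition dball (R : realType) (T : Type) (d : T -> T -> R) (x : T) (e : R) : set T :=
  [set y | d x y < e].

Definition dopen (R : realType) (T : Type) (d : T -> T -> R) (A : set T) : Prop :=
  forall x, A x -> exists2 e : R, 0 < e & dball d x e `<=` A.

Definition dcauchy (R : realType) (T : Type) (d : T -> T -> R) (u : nat -> T) : Prop :=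
  forall e : R, 0 < e -> exists N : nat, forall m n : nat,
    (N <= m)%N -> (N <= n)%N -> d (u m) (u n) < e.

Definition dconverges (R : realType) (T : Type) (d : T -> T -> R) (u : nat -> T) : Prop :=
  exists x : T, forall e : R, 0 < e -> exists N : nat, forall n : nat,
    (N <= n)%N -> d (u n) x < e.

Definition polish (R : realType) (T : topologicalType) : Prop :=
  (exists D : set T, countable D /\ dense D) /\
  (exists rho : T -> T -> R,
     [/\ is_metric rho,
         (forall A : set T, open A <-> dopen rho A) &
         (forall u : nat -> T, dcauchy rho u -> dconverges rho u)]).

(* Topometric space (X, tau, d): d is a metric whose topology refines tau
   and d is tau-lower semicontinuous. *)
Definition topometric (R : realType) (X : topologicalType) (d : X -> X -> R) : Prop :=
  [/\ is_metric d,
      (forall U : set X, open U -> dopen d U) &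
      (forall r : R, closed [set p : X * X | d p.1 p.2 <= r])].

(* (B)_e = {x | d(x,B) < e} = {x | exists b in B, d x b < e} *)
Definition thicken (R : realType) (X : Type) (d : X -> X -> R) (B : set X) (e : R) : set X :=
  [set x | exists2 b, B b & d x b < e].

Definition dclosure (R : realType) (X : Type) (d : X -> X -> R) (B : set X) : set X :=
  [set x | forall e : R, 0 < e -> exists2 b, B b & d x b < e].

Definition nowhere_dense (T : topologicalType) (A : set T) : Prop :=
  interior (closure A) = set0.

Definition meagre (T : topologicalType) (A : set T) : Prop :=
  exists F : nat -> set T, (forall n, nowhere_dense (F n)) /\ A `<=` \bigcup_n F n.

Definition comeagre (T : topologicalType) (A : set T) : Prop := meagre (~` A).

From HB Require Import structures.
From mathcomp Require Import all_boot all_order all_algebra.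
From mathcomp Require Import all_classical all_reals all_analysis.
Import Order.TTheory GRing.Theory Num.Theory.
Local Open Scope classical_set_scope.
Local Open Scope ring_scope.

(** The co-meagre set A contains an intersection of dense open sets W_n; fix
  r > 0.  For a basic open set U of Y (Y itself or a ball about a
  point of a countable dense sequence) and an index n, the points of (fU)_r that
  lie in no (fB)_r, B a small ball whose closed ball lies in U and W_n, form a
  nowhere dense set: the union of these (fB)_r is open by hypothesis and dense in
  (fU)_r because f^-1((N)_r) is open.  A point x of (fY)_r outside all these
  countably many exceptional sets admits a nested sequence of such balls whose
  images all come r-close to x; completeness of Y yields a limit z in every W_n,
  hence in A, and lower semi-continuity of d gives d(x, f z) <= r.  So the
  complement of (fA)_2r is meagre, since (fY)_r is open and dense; letting r go
  to 0 handles the d-closure. *)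

Section meagre_sets.
Context {T : topologicalType}.
Implicit Types A B S M : set T.

Lemma nowhere_dense0 : nowhere_dense (@set0 T).
Proof. by rewrite /nowhere_dense closure0 interior0. Qed.

Lemma nowhere_dense_setD_open S M : open M ->
  (forall N, open N -> N `&` S !=set0 -> N `&` M !=set0) ->
  nowhere_dense (S `\` M).
Proof.
move=> oM SM; apply/seteqP; split=> // p /=.
rewrite /interior nbhsE => -[B [oB Bp] BC].
have [q [[Sq Mq] Bq]] := BC p Bp B (open_nbhs_nbhs (conj oB Bp)).
have [q' [Bq' Mq']] := SM B oB (ex_intro _ q (conj Bq Sq)).
by have [z [[_ nMz] Mz]] := BC q' Bq' M (open_nbhs_nbhs (conj oM Mq')).
Qed.

Lemma meagre_subset A B : A `<=` B -> meagre B -> meagre A.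
Proof. by move=> AB [F [hF BF]]; exists F; split => //; apply: subset_trans BF. Qed.

Lemma meagre_nowhere_dense A : nowhere_dense A -> meagre A.
Proof.
move=> hA; exists (fun n => if n is 0%N then A else set0); split.
  by case=> [|n] //; apply: nowhere_dense0.
by move=> x Ax; exists 0%N.
Qed.

Lemma meagre_bigcup (I : countType) (S : I -> set T) :
  (forall i, meagre (S i)) -> meagre (\bigcup_i S i).
Proof.
move=> hS; have [F hF] := choice hS.
exists (fun p => if (unpickle p : option (I * nat)) is Some (i, n) then F i n
                 else set0); split.
  move=> p; case: (unpickle p) => [[i n]|]; last exact: nowhere_dense0.
  exact: (hF i).1.
move=> x [i _ Six]; have [n _ Fx] := (hF i).2 x Six.
by exists (pickle (i, n)) => //; rewrite pickleK.
Qed.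

Lemma meagreU A B : meagre A -> meagre B -> meagre (A `|` B).
Proof.
move=> hA hB; have -> : A `|` B = \bigcup_(b : bool) (if b then A else B).
  apply/seteqP; split=> x; first by case=> h; [exists true|exists false].
  by case; case=> _ h; [left|right].
by apply: meagre_bigcup; case.
Qed.

Lemma comeagre_dense_opens A : comeagre A ->
  exists W : nat -> set T, [/\ forall n, open (W n), forall n, dense (W n) &
    forall z, (forall n, W n z) -> A z].
Proof.
case=> F [hF AF]; exists (fun n => ~` closure (F n)); split.
- by move=> n; rewrite openC; exact: closed_closure.
- move=> n O [w Ow] oO; apply: contrapT => hn.
  have : interior (closure (F n)) w.
    apply: filterS (open_nbhs_nbhs (conj oO Ow)) => v Ov.
    by apply: contrapT => cv; apply: hn; exists v.
  by rewrite (hF n).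
- move=> z Wz; apply: contrapT => nAz; have [n _ Fz] := AF z nAz.
  by apply: (Wz n); apply: subset_closure.
Qed.

End meagre_sets.

Lemma countable_dense_seq {T : topologicalType} {D : set T} (t0 : T) :
  countable D -> dense D ->
  exists e : nat -> T, forall O, open O -> O !=set0 -> exists k, O (e k).
Proof.
move=> /countable_injP[inj injD] dD.
have /choice[e De] : forall n, exists y : T,
    (exists2 z, D z & inj z = n) -> D y /\ inj y = n.
  move=> n; case: (pselect (exists2 z, D z & inj z = n)) => [[z Dz <-]|nz].
    by exists z.
  by exists t0 => /nz.
exists e => O oO O0; have [z [Oz Dz]] := dD O O0 oO.
have [Dez ez] := De (inj z) (ex_intro2 _ _ z Dz erefl).
by exists (inj z); rewrite (injD (e (inj z)) z) ?inE.
Qed.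

Lemma natSinv_lt_ge {R : realType} n {eps : R} : 0 < eps ->
  exists2 m, (n <= m)%N & m.+1%:R^-1 < eps.
Proof.
move=> eps0; exists (n + Num.truncn eps^-1)%N; first exact: leq_addr.
rewrite invf_plt ?posrE //; apply: lt_le_trans (truncnS_gt _) _.
by rewrite ler_nat ltnS leq_addl.
Qed.

Lemma natSinv_le {R : realType} n m : (n <= m)%N -> m.+1%:R^-1 <= n.+1%:R^-1 :> R.
Proof. by move=> nm; rewrite lef_pV2 ?posrE // ler_nat ltnS. Qed.

Section complete_metric.
Context {R : realType} {Y : topologicalType} {rho : Y -> Y -> R}.
Hypotheses (rho_metric : is_metric rho)
  (rho_open : forall A : set Y, open A <-> dopen rho A)
  (rho_complete : forall u, dcauchy rho u -> dconverges rho u).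

Lemma dball_open c q : open (dball rho c q).
Proof.
case: rho_metric => _ _ _ tri; apply/rho_open => z /= cz.
exists (q - rho c z); first by rewrite subr_gt0.
by move=> w /= zw; apply: le_lt_trans (tri c z w) _; rewrite -ltrBrDl.
Qed.

Lemma dlim_cvg (u : nat -> Y) z :
  (forall e, 0 < e -> exists N, forall n, (N <= n)%N -> rho (u n) z < e) ->
  u n @[n --> \oo] --> z.
Proof.
case: rho_metric => _ _ sym _ uz B; rewrite nbhsE; case=> O [oO Oz] OB.
have [e e0 zeO] := (rho_open O).1 oO z Oz.
have [N uzN] := uz e e0.
by exists N => // n Nn; apply/OB/zeO; rewrite /dball /= sym; exact: uzN.
Qed.

Lemma nested_balls_cvg (c y : nat -> Y) (m : nat -> nat) :
  (forall n, (n <= m n)%N) ->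
  (forall n p, (n < p)%N -> rho (c n) (y p) <= (m n).+1%:R^-1) ->
  exists2 z, y n @[n --> \oo] --> z & forall n, rho (c n) z <= (m n).+1%:R^-1.
Proof.
case: rho_metric => _ _ sym tri mn cy.
have y_cauchy : dcauchy rho y.
  move=> eps eps0; have [n _ hn] := natSinv_lt_ge 0 (divr_gt0 eps0 (ltr0n R 2)).
  have small : (m n).+1%:R^-1 < eps / 2 by apply: le_lt_trans hn; apply: natSinv_le.
  exists n.+1 => p q np nq; apply: le_lt_trans (tri (y p) (c n) (y q)) _.
  by rewrite (splitr eps) sym ltrD // (le_lt_trans _ small) ?cy.
have [z yz] := rho_complete _ y_cauchy.
exists z; first exact: dlim_cvg.
move=> n; apply/ler_addgt0Pr => eta eta0; have [N hN] := yz eta eta0.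
apply: le_trans (tri (c n) (y (maxn N n.+1)) z) _.
by rewrite lerD ?cy ?ltW ?hN // leq_max ?ltnSn ?orbT ?leqnn.
Qed.

End complete_metric.

Lemma lsc_dist_lim {R : realType} {X : topologicalType} {d : X -> X -> R}
    (d_lsc : forall r, closed [set p : X * X | d p.1 p.2 <= r])
    {x} {u : nat -> X} {z r} :
  u n @[n --> \oo] --> z -> (forall n, d x (u n) <= r) -> d x z <= r.
Proof.
move=> uz xu.
have xuz : (x, u n) @[n --> \oo] --> (x, z) by apply: cvg_pair => //; exact: cvg_cst.
by apply: (closed_cvg _ (d_lsc r) _ _ xuz); apply: nearW.
Qed.

Lemma dclosureC_subset {R : realType} {X : Type} (d : X -> X -> R) (B : set X) :
  ~` dclosure d B `<=` \bigcup_k ~` thicken d B k.+1%:R^-1.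
Proof.
move=> x ncl; apply: contrapT => hn; apply: ncl => eps eps0.
have [k _ keps] := natSinv_lt_ge 0 eps0.
have [b Bb xb] : thicken d B k.+1%:R^-1 x.
  by apply: contrapT => nx; apply: hn; exists k.
by exists b => //; apply: lt_trans keps.
Qed.

Lemma nowhere_dense_thickenC {R : realType} {X : topologicalType} {d : X -> X -> R}
    {B : set X} {r} :
  is_metric d -> dense B -> open (thicken d B r) -> 0 < r ->
  nowhere_dense (~` thicken d B r).
Proof.
case=> _ d0 _ _ dB oBr r0; rewrite -setTD; apply: nowhere_dense_setD_open => //.
move=> N oN [w [Nw _]]; have [v [Nv Bv]] := dB N (ex_intro _ w Nw) oN.
by exists v; split => //; exists v => //; rewrite (d0 v v).2.
Qed.

Section topometric_image.
Context {R : realType} {X Y : topologicalType} {d : X -> X -> R} {rho : Y -> Y -> R}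
  {f : Y -> X}.
Hypotheses (d_metric : is_metric d)
  (d_lsc : forall r, closed [set p : X * X | d p.1 p.2 <= r])
  (rho_metric : is_metric rho)
  (rho_open : forall A : set Y, open A <-> dopen rho A)
  (rho_complete : forall u, dcauchy rho u -> dconverges rho u)
  (f_cont : continuous f) (f_dense : dense (range f))
  (f_thicken_open : forall U e, open U -> 0 < e -> open (thicken d (f @` U) e))
  (thicken_open : forall V e, open V -> 0 < e -> open (thicken d V e)).
Context {e : nat -> Y}.
Hypothesis e_dense : forall O, open O -> O !=set0 -> exists k, O (e k).
Context {W : nat -> set Y}.
Hypotheses (W_open : forall n, open (W n)) (W_dense : forall n, dense (W n)).
Context {r : R}.
Hypothesis r_gt0 : 0 < r.

Definition seq_ball k m : set Y := dball rho (e k) m.+1%:R^-1.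

Definition basic_open (j : option (nat * nat)) : set Y :=
  if j is Some km then seq_ball km.1 km.2 else setT.

Definition refines n (U : set Y) k m : Prop :=
  [set z | rho (e k) z <= m.+1%:R^-1] `<=` U `&` W n /\ (n <= m)%N.

Definition refined_thicken n (U : set Y) : set X :=
  [set x | exists k m, refines n U k m /\ thicken d (f @` seq_ball k m) r x].

Definition exceptional n j : set X :=
  thicken d (f @` basic_open j) r `\` refined_thicken n (basic_open j).

Lemma basic_open_open j : open (basic_open j).
Proof. by case: j => [km|]; [exact: dball_open | exact: openT]. Qed.

Lemma refined_thicken_open n U : open (refined_thicken n U).
Proof.
rewrite openE => x [k [m [km xkm]]].
have okm : open (thicken d (f @` seq_ball k m) r).
  by apply: f_thicken_open r_gt0; exact: dball_open.
by apply: filterS (open_nbhs_nbhs (conj okm xkm)) => w wkm; exists k, m.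
Qed.

Lemma exceptional_nowhere_dense n j : nowhere_dense (exceptional n j).
Proof.
case: rho_metric => _ rho0 rho_sym rho_tri; case: d_metric => _ _ d_sym _.
apply: nowhere_dense_setD_open; first exact: refined_thicken_open.
move=> N oN [x [Nx [_ [u ju <-] xu]]].
pose P := basic_open j `&` f @^-1` thicken d N r.
have oP : open P.
  apply: openI; first exact: basic_open_open.
  by apply: open_comp; [move=> z _; exact: f_cont | exact: thicken_open].
have [y [[jy [x' Nx' yx']] Wy]] : P `&` W n !=set0.
  by apply: W_dense => //; exists u; split => //; exists x => //; rewrite d_sym.
have [del del0 yjW] :=
  (rho_open _).1 (openI (basic_open_open j) (W_open n)) y (conj jy Wy).
have [m nm mdel] := natSinv_lt_ge n (divr_gt0 del0 (ltr0n R 2)).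
have [k yk] : exists k, dball rho y m.+1%:R^-1 (e k).
  apply: e_dense; first exact: dball_open.
  by exists y; rewrite /dball /= (rho0 y y).2.
exists x'; split => //; exists k, m; split.
  split => // z /= kz; apply: yjW; rewrite /dball /=.
  apply: le_lt_trans (rho_tri y (e k) z) _.
  by rewrite (splitr del) ltr_leD ?(lt_trans yk mdel) // (le_trans kz (ltW mdel)).
by exists (f y); [exists y => //; rewrite /seq_ball /dball /= rho_sym | rewrite d_sym].
Qed.

Lemma nested_refinement x :
  thicken d (range f) r x -> (forall n j, ~ exceptional n j x) ->
  exists (c y : nat -> Y) (m : nat -> nat),
    [/\ forall n, [set z | rho (c n) z <= (m n).+1%:R^-1] `<=` W n,
        forall n, (n <= m n)%N,
        forall n p, (n < p)%N -> rho (c n) (y p) <= (m n).+1%:R^-1 &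
        forall n, d x (f (y n)) < r].
Proof.
move=> xY x_reg.
have /choice[g gP] : forall p : nat * option (nat * nat), exists km : nat * nat,
    thicken d (f @` basic_open p.2) r x ->
    refines p.1 (basic_open p.2) km.1 km.2 /\ thicken d (f @` seq_ball km.1 km.2) r x.
  move=> [n j]; case: (pselect (thicken d (f @` basic_open j) r x)) => [xj|nxj].
    have [k [m kmP]] : refined_thicken n (basic_open j) x.
      by apply: contrapT => nref; exact: (x_reg n j).
    by exists (k, m).
  by exists (0, 0)%N => /nxj.
(* [s n] is the n-th set of the nested sequence, starting from [s 0 = Y]. *)
pose s := fix s n := if n is p.+1 then Some (g (p, s p)) else None.
have xs n : thicken d (f @` basic_open (s n)) r x.
  by elim: n => [|n IH] //=; exact: (gP (n, s n) IH).2.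
have ref n := (gP (n, s n) (xs n)).1.
have nest n p : (n <= p)%N -> basic_open (s p) `<=` basic_open (s n).
  elim: p => [|p IH]; first by rewrite leqn0 => /eqP ->.
  rewrite leq_eqVlt => /orP[/eqP -> //|np] z spz.
  by apply: IH np _ _; apply: ((ref p).1 z _).1; exact: ltW.
have /choice[y yP] : forall n, exists y, basic_open (s n) y /\ d x (f y) < r.
  by move=> n; have [_ [y sy <-] xy] := xs n; exists y.
exists (fun n => e (g (n, s n)).1), y, (fun n => (g (n, s n)).2); split.
- by move=> n z /(ref n).1[].
- by move=> n; exact: (ref n).2.
- by move=> n p np; exact: ltW (nest n.+1 p np _ (yP p).1).
- by move=> n; exact: (yP n).2.
Qed.

Lemma thicken_image_of_nonexceptional (A : set Y) x :
  (forall z, (forall n, W n z) -> A z) ->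
  thicken d (range f) r x -> (forall n j, ~ exceptional n j x) ->
  thicken d (f @` A) (r + r) x.
Proof.
move=> WA xY x_reg; have [c [y [m [cW mn cy xy]]]] := nested_refinement _ xY x_reg.
have [z yz cz] := nested_balls_cvg rho_metric rho_open rho_complete _ _ _ mn cy.
have xz : d x (f z) <= r.
  apply: (lsc_dist_lim d_lsc (cvg_comp _ _ yz (f_cont z))) => n.
  exact: ltW.
exists (f z); first by exists z => //; apply: WA => n; exact: cW (cz n).
by apply: le_lt_trans xz _; rewrite ltrDl.
Qed.

Lemma meagre_thickenC_image (A : set Y) :
  (forall z, (forall n, W n z) -> A z) -> meagre (~` thicken d (f @` A) (r + r)).
Proof.
move=> WA; apply: (@meagre_subset _ _ (~` thicken d (range f) r `|`
    \bigcup_(p : nat * option (nat * nat)) exceptional p.1 p.2)).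
  move=> x nx; apply: contrapT => ncov; apply/nx/thicken_image_of_nonexceptional => //.
  - by apply: contrapT => xY; apply: ncov; left.
  - by move=> n j xnj; apply: ncov; right; exists (n, j).
apply: meagreU.
  apply: meagre_nowhere_dense; apply: nowhere_dense_thickenC => //.
  exact: f_thicken_open openT r_gt0.
by apply: meagre_bigcup => -[n j]; exact/meagre_nowhere_dense/exceptional_nowhere_dense.
Qed.

End topometric_image.

Theorem theorem5p2 (R : realType) (X Y : topologicalType) (d : X -> X -> R)
  (hX : topometric d) (pX : polish R X) (pY : polish R Y)
  (f : Y -> X) (fc : continuous f) (fd : dense (range f))
  (hU : forall (U : set Y) (e : R), open U -> 0 < e -> open (thicken d (f @` U) e))
  (hV : forall (V : set X) (e : R), open V -> 0 < e -> open (thicken d V e))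
  (A : set Y) :
  comeagre A -> comeagre (dclosure d (f @` A)).
Proof.
case: hX => d_metric _ d_lsc.
case: pY => -[D [D_count D_dense]] [rho [rho_metric rho_open rho_complete]].
move=> /comeagre_dense_opens[W [W_open W_dense WA]].
have [[y0 _]|noY] := pselect (exists y : Y, True); last first.
  (* then X is empty too, as range f is dense *)
  exists (fun=> set0); split=> [_|x _]; first exact: nowhere_dense0.
  have [_ [_ [y _ _]]] := fd setT (ex_intro _ x I) openT.
  by case: noY; exists y.
have [e e_dense] := countable_dense_seq y0 D_count D_dense.
apply: meagre_subset (dclosureC_subset d (f @` A)) _.
apply: meagre_bigcup => k; rewrite (splitr k.+1%:R^-1).
apply: (meagre_thickenC_image d_metric d_lsc rho_metric rho_open rho_complete
  fc fd hU hV e_dense W_open W_dense) => //.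
Qed.
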